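(* Let $m,t,n$ be positive integers with $mt<n\le 2^m$, let $\alpha=(\alpha_1,\dots,\alpha_n)\in\mathbb{F}_{2^m}^n$ be a support tuple, let $p\in\mathbb{F}_2^n$ with $0<\mathrm{wt}(p)\le t$, let $d\in\mathbb{N}$ with $d<t$, and let $\varepsilon\in\mathbb{F}_{2^m}$. Let $\sigma_p(x)=\prod_{i\in I_p}(x-\alpha_i)$ and $\tilde\sigma_p(x)=\varepsilon x^d+\sigma_p(x)$, and let $\tilde p\in\mathbb{F}_2^n$ be defined by $\tilde p_i=1$ if and only if $\tilde\sigma_p(\alpha_i)=0$ (for $i=1,\dots,n$). Then: (a) If $\mathrm{wt}(\tilde p)>\mathrm{wt}(p)$, then $\varepsilon\neq 0$. (b) Either $p=\tilde p$ or $\#(I_p\cap I_{\tilde p})\le 1$. (c) If $\varepsilon\neq 0$, then for $i\in\{1,\dots,n\}$ we have $I_p\cap I_{\tilde p}=\{i\}$ if and only if $i\in I_p$, $\alpha_i=0$, and $d>0$.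
   Context: $\mathbb{F}_{2^m}$ denotes the finite field with $2^m$ elements. A support tuple is a tuple $\alpha=(\alpha_1,\dots,\alpha_n)\in\mathbb{F}_{2^m}^n$ with $\alpha_i\neq\alpha_j$ for $i\neq j$. For $c=(c_1,\dots,c_n)\in\mathbb{F}_2^n$, $I_c=\{i\in\{1,\dots,n\}\mid c_i=1\}$ and $\mathrm{wt}(c)=\#I_c$ is the Hamming weight. The triple $(p,d,\tilde p)$ models a fault injection into the $d$-th coefficient of the error-locator polynomial $\sigma_p$ during decryption, with the fault $\varepsilon$. *)

From mathcomp Require Import all_boot all_order all_algebra all_field.
Set Implicit Arguments. Unset Strict Implicit. Unset Printing Implicit Defensive.
Import GRing.Theory.
Local Open Scope ring_scope.

Definition support_tuple (F : finFieldType) (n : nat) (alpha : 'I_n -> F) : Prop :=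
  injective alpha.

(* Vectors of F_2^n are represented as {ffun 'I_n -> bool} (true = 1). *)
Definition Iset (n : nat) (c : {ffun 'I_n -> bool}) : {set 'I_n} := [set i | c i].
Definition wt (n : nat) (c : {ffun 'I_n -> bool}) : nat := #|Iset c|.

Definition sigma (F : finFieldType) (n : nat) (alpha : 'I_n -> F)
  (p : {ffun 'I_n -> bool}) : {poly F} :=
  \prod_(i in Iset p) ('X - (alpha i)%:P).

Definition sigma_tilde (F : finFieldType) (n : nat) (alpha : 'I_n -> F)
  (p : {ffun 'I_n -> bool}) (d : nat) (eps : F) : {poly F} :=
  eps *: 'X^d + sigma alpha p.

Definition ptilde (F : finFieldType) (n : nat) (alpha : 'I_n -> F)
  (p : {ffun 'I_n -> bool}) (d : nat) (eps : F) : {ffun 'I_n -> bool} :=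
  [ffun i => root (sigma_tilde alpha p d eps) (alpha i)].

(* The fault changes the value of the locator at alpha_i by eps * alpha_i ^ d.
   At a root alpha_i of sigma_p the faulted value is therefore eps * alpha_i ^ d,
   which for eps != 0 vanishes exactly when alpha_i = 0 and d > 0; since the
   alpha_i are distinct, at most one index can do so.  For eps = 0 nothing
   changes. *)

From mathcomp Require Import all_boot all_order all_algebra all_field.
Import GRing.Theory.
Local Open Scope ring_scope.

Section FaultedLocator.

Variables (F : finFieldType) (n : nat) (alpha : 'I_n -> F).
Hypothesis alpha_inj : injective alpha.
Variables (p : {ffun 'I_n -> bool}) (d : nat) (eps : F).

Lemma root_sigma (i : 'I_n) : root (sigma alpha p) (alpha i) = (i \in Iset p).
Proof.
rewrite rootE /sigma horner_prod; apply/prodf_eq0/idP => [[j Ij]|Ii].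
  by rewrite hornerXsubC subr_eq0 => /eqP/alpha_inj ->.
by exists i => //; rewrite hornerXsubC subrr.
Qed.

Lemma ptilde_eps0 : ptilde alpha p d 0 = p.
Proof.
apply/ffunP => i; rewrite ffunE /sigma_tilde scale0r add0r root_sigma.
by rewrite inE.
Qed.

Lemma mem_Iset_ptilde (i : 'I_n) :
  (i \in Iset (ptilde alpha p d eps)) =
  (eps * alpha i ^+ d + (sigma alpha p).[alpha i] == 0).
Proof. by rewrite inE ffunE rootE /sigma_tilde !hornerE. Qed.

Hypothesis eps_neq0 : eps != 0.

Lemma mem_Iset_ptildeI (i : 'I_n) :
  (i \in Iset p :&: Iset (ptilde alpha p d eps)) =
  [&& i \in Iset p, alpha i == 0 & (0 < d)%N].
Proof.
rewrite inE mem_Iset_ptilde; case Ip: (i \in Iset p) => //=.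
move: Ip; rewrite -root_sigma rootE => /eqP ->.
by rewrite addr0 mulf_eq0 (negbTE eps_neq0) expf_eq0 andbC.
Qed.

Lemma card_Iset_ptildeI_le1 :
  (#|Iset p :&: Iset (ptilde alpha p d eps)| <= 1)%N.
Proof.
apply/card_le1_eqP => j k; rewrite !mem_Iset_ptildeI.
by move=> /and3P[_ /eqP aj0 _] /and3P[_ /eqP ak0 _]; apply: alpha_inj; rewrite aj0.
Qed.

Lemma Iset_ptildeI_eq1 (i : 'I_n) :
  Iset p :&: Iset (ptilde alpha p d eps) = [set i] <->
  [/\ i \in Iset p, alpha i = 0 & (0 < d)%N].
Proof.
set I := Iset p :&: Iset (ptilde alpha p d eps).
have I_eq1 : (I = [set i]) <-> i \in I.
  split=> [-> | I_i]; first exact: set11.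
  apply/eqP; rewrite eq_sym eqEcard sub1set I_i cards1.
  exact: card_Iset_ptildeI_le1.
apply: iff_trans I_eq1 _; rewrite mem_Iset_ptildeI.
split=> [/and3P[Ip /eqP ai0 d_gt0] | [Ip ai0 d_gt0]]; first by [].
by rewrite Ip ai0 d_gt0 eqxx.
Qed.

End FaultedLocator.

Theorem proposition4p7 (F : finFieldType) (m t n : nat)
  (HF2 : 2%N \in [pchar F]) (HFcard : #|F| = (2 ^ m)%N)
  (Hm : (0 < m)%N) (Ht : (0 < t)%N) (Hn : (0 < n)%N)
  (Hmtn : (m * t < n)%N) (Hn2m : (n <= 2 ^ m)%N)
  (alpha : 'I_n -> F) (Halpha : support_tuple alpha)
  (p : {ffun 'I_n -> bool}) (Hp0 : (0 < wt p)%N) (Hpt : (wt p <= t)%N)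
  (d : nat) (Hdt : (d < t)%N) (eps : F) :
  let pt := ptilde alpha p d eps in
  [/\ ((wt p < wt pt)%N -> eps != 0),
      (p = pt \/ (#|Iset p :&: Iset pt| <= 1)%N) &
      (eps != 0 -> forall i : 'I_n,
         Iset p :&: Iset pt = [set i] <->
         [/\ i \in Iset p, alpha i = 0 & (0 < d)%N])].
Proof.
rewrite /=; split.
- by apply: contraTneq => ->; rewrite ptilde_eps0 // ltnn.
- have [-> | eps_neq0] := eqVneq eps 0.
    by left; rewrite ptilde_eps0.
  by right; apply: card_Iset_ptildeI_le1.
- by move=> eps_neq0 i; apply: Iset_ptildeI_eq1.
Qed.
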